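(* Under the standing assumptions, suppose $\varphi$ is lower semicontinuous on $X$, and let $\rho_k\to\infty$, $\sigma_k\to0$ with $\rho_k,\sigma_k>0$. Then for any sequence $\{x_k\}\subset X$ with $x_k\to\bar x$, every accumulation point of $\{y^*_{\rho_k,\sigma_k}(x_k)\}$ belongs to $\arg\max\{f(\bar x,y): y\in Y,\ c(\bar x,y)\le0\}$.
   Context: Standing assumptions: $X\subset\mathbb{R}^n$, $Y\subset\mathbb{R}^m$ nonempty, convex, compact; $f$ continuously differentiable with Lipschitz gradient on $X\times Y$, $f(x,\cdot)$ concave on $Y$; $c=(c_1,\dots,c_p)$ with continuously differentiable components having Lipschitz gradients, each $c_i(x,\cdot)$ convex on $Y$; $\Theta(x):=\{y\in Y:c(x,y)\le0\}\neq\emptyset$ for all $x\in X$. Notation: $[z]_+=\max\{z,0\}$ componentwise; $\varphi(x):=\max_{y\in\Theta(x)}f(x,y)$; $\psi_{\rho,\sigma}(x,y):=f(x,y)-\frac{\rho}{2}\|[c(x,y)]_+\|^2-\frac{\sigma}{2}\|y\|^2$; $y^*_{\rho,\sigma}(x)$ is the unique maximizer of $\psi_{\rho,\sigma}(x,\cdot)$ over $Y$. *)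

From HB Require Import structures.
From mathcomp Require Import all_boot all_order all_algebra.
From mathcomp Require Import all_classical all_reals all_analysis.
Set Implicit Arguments. Unset Strict Implicit. Unset Printing Implicit Defensive.
Import Order.TTheory GRing.Theory Num.Theory.
Import numFieldNormedType.Exports.
Local Open Scope classical_set_scope.
Local Open Scope ring_scope.

Definition sqnorm {R : realType} {m : nat} (y : 'rV[R]_m) : R :=
  \sum_(i < m) (y 0 i) ^+ 2.

Definition pos_part {R : realType} (z : R) : R := Num.max z 0.

(* continuously differentiable with Lipschitz gradient on a set S of a
   normed space: differentiable at each point of S, with a differential that
   is Lipschitz on S in operator norm (which gives continuity of the gradient). *)
Definition C11_on {R : realType} {V : normedModType R} (S : set V) (g : V -> R) : Prop :=
  (forall p, S p -> differentiable g p) /\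
  exists L : R, forall p q v, S p -> S q ->
    `| 'd g p v - 'd g q v | <= L * `|p - q| * `|v|.

Definition Theta {R : realType} {n m p : nat} (Y : set 'rV[R]_m)
  (c : 'I_p -> 'rV[R]_n -> 'rV[R]_m -> R) (x : 'rV[R]_n) : set 'rV[R]_m :=
  [set y | Y y /\ forall i, c i x y <= 0].

(* phi(x) = max_{y in Theta x} f(x,y), written as a supremum (it is attained
   under the standing assumptions) *)
Definition phi {R : realType} {n m p : nat} (Y : set 'rV[R]_m)
  (f : 'rV[R]_n -> 'rV[R]_m -> R)
  (c : 'I_p -> 'rV[R]_n -> 'rV[R]_m -> R) (x : 'rV[R]_n) : R :=
  sup [set f x y | y in Theta Y c x].

Definition psi {R : realType} {n m p : nat}
  (f : 'rV[R]_n -> 'rV[R]_m -> R)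
  (c : 'I_p -> 'rV[R]_n -> 'rV[R]_m -> R) (rho sigma : R)
  (x : 'rV[R]_n) (y : 'rV[R]_m) : R :=
  f x y - rho / 2 * (\sum_(i < p) (pos_part (c i x y)) ^+ 2)
        - sigma / 2 * sqnorm y.

Definition is_ystar {R : realType} {n m p : nat} (Y : set 'rV[R]_m)
  (f : 'rV[R]_n -> 'rV[R]_m -> R)
  (c : 'I_p -> 'rV[R]_n -> 'rV[R]_m -> R) (rho sigma : R)
  (x : 'rV[R]_n) (y : 'rV[R]_m) : Prop :=
  Y y /\ forall y', Y y' -> psi f c rho sigma x y' <= psi f c rho sigma x y.

Definition lsc_on {R : realType} {n : nat} (X : set 'rV[R]_n) (g : 'rV[R]_n -> R) : Prop :=
  forall x, X x -> forall e : R, 0 < e -> exists2 d : R, 0 < d &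
    forall x', X x' -> `|x' - x| < d -> g x - e < g x'.

Definition acc_point {R : realType} {m : nat} (u : nat -> 'rV[R]_m) (a : 'rV[R]_m) : Prop :=
  forall e : R, 0 < e -> forall N : nat, exists2 k : nat, (N <= k)%N & `|u k - a| < e.

Definition argmax_set {R : realType} {n m p : nat} (Y : set 'rV[R]_m)
  (f : 'rV[R]_n -> 'rV[R]_m -> R)
  (c : 'I_p -> 'rV[R]_n -> 'rV[R]_m -> R) (x : 'rV[R]_n) : set 'rV[R]_m :=
  [set y | Theta Y c x y /\ forall y', Theta Y c x y' -> f x y' <= f x y].

(* The penalty term is squeezed by the optimality of [y*_k] against any feasible point:
   [rho_k * sum_i [c_i(x_k, y*_k)]_+^2 <= 4 sup|f| + sigma_k sup ||y||^2], so an
   accumulation point violating a constraint would force the left side to blow up as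
   [rho_k -> oo]; hence [ybar] is feasible.  The same comparison, now against a
   near-maximizer of [f(x_k, .)] over [Theta(x_k)], gives
   [f(x_k, y*_k) >= phi(x_k) - sigma_k sup ||y||^2 / 2 - e]; letting [k -> oo] along the
   accumulating subsequence, continuity of [f] and lower semicontinuity of [phi] yield
   [f(xbar, ybar) >= phi(xbar)]. *)
From HB Require Import structures.
From mathcomp Require Import all_boot all_order all_algebra.
From mathcomp Require Import all_classical all_reals all_analysis.
From mathcomp Require Import lra.
Import Order.TTheory GRing.Theory Num.Theory.
Import numFieldNormedType.Exports.
Local Open Scope classical_set_scope.
Local Open Scope ring_scope.

Lemma continuous_at_pair_dist_lt {R : realType} {n m : nat}
    {g : 'rV[R]_n * 'rV[R]_m -> R} {a : 'rV[R]_n} {b : 'rV[R]_m} :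
  {for (a, b), continuous g} -> forall e : R, 0 < e -> exists2 d : R, 0 < d &
  forall x y, `|x - a| < d -> `|y - b| < d -> `|g (x, y) - g (a, b)| < e.
Proof.
move=> /cvgrPdist_lt gcont e e0.
have /nbhs_ballP [d d0 hd] := gcont e e0.
exists d => // x y hx hy; rewrite distrC; apply: (hd (x, y)).
by split; rewrite /= -ball_normE /= distrC.
Qed.

Lemma acc_point_near {R : realType} {m : nat} {u : nat -> 'rV[R]_m} {a}
    {P : nat -> Prop} :
  acc_point u a -> (\forall k \near \oo, P k) ->
  forall e : R, 0 < e -> exists2 k, P k & `|u k - a| < e.
Proof.
move=> acc [N _ hN] e e0; have [k hk hu] := acc e e0 N.
by exists k => //; apply: hN.
Qed.

Lemma compact_mem_approx {R : realType} {m : nat} {A : set 'rV[R]_m} {a} :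
  compact A -> (forall e : R, 0 < e -> exists2 z, A z & `|z - a| < e) -> A a.
Proof.
move=> /compact_closed closedA approx.
have : closure A a.
  move=> B /nbhs_ballP [e e0 hB]; have [z Az hz] := approx e e0.
  by exists z; split => //; apply: hB; rewrite /= -ball_normE /= distrC.
by move: (closedA (@norm_hausdorff _ _)) => /closure_id <-.
Qed.

Lemma compact_norm_bounded {R : realType} {V : normedModType R} {A : set V} :
  compact A -> exists M : R, forall x, A x -> `|x| <= M.
Proof.
move=> /compact_bounded [M0 [_ hM]].
exists (`|M0| + 1) => x Ax; apply: (hM (`|M0| + 1)) => //.
by have := ler_norm M0; lra.
Qed.

Lemma sqnorm_ge0 {R : realType} {m : nat} (y : 'rV[R]_m) : 0 <= sqnorm y.
Proof. by apply: sumr_ge0 => i _; apply: sqr_ge0. Qed.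

Lemma sqnorm_le {R : realType} {m : nat} {y : 'rV[R]_m} {B : R} :
  `|y| <= B -> sqnorm y <= m%:R * B ^+ 2.
Proof.
move=> hB; rewrite /sqnorm.
have -> : m%:R * B ^+ 2 = \sum_(i < m) B ^+ 2 by rewrite sumr_const card_ord mulr_natl.
apply: ler_sum => i _.
have entry_le : `|y 0 i| <= B.
  apply: le_trans hB; rewrite [`|y|]mx_normrE; exact: (le_bigmax _ _ (0, i)).
by rewrite -real_normK ?num_real //; have := normr_ge0 (y 0 i); nra.
Qed.

Section Penalty.
Context {R : realType} {n m p : nat} (c : 'I_p -> 'rV[R]_n -> 'rV[R]_m -> R).

Definition penalty (x : 'rV[R]_n) (y : 'rV[R]_m) : R :=
  \sum_(i < p) pos_part (c i x y) ^+ 2.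

Lemma penalty_ge0 x y : 0 <= penalty x y.
Proof. by apply: sumr_ge0 => i _; apply: sqr_ge0. Qed.

Lemma penalty_ge_term x y i : pos_part (c i x y) ^+ 2 <= penalty x y.
Proof.
by rewrite /penalty (bigD1 i) //= lerDl; apply: sumr_ge0 => j _; apply: sqr_ge0.
Qed.

Lemma penalty_feasible {Y : set 'rV[R]_m} {x y} : Theta Y c x y -> penalty x y = 0.
Proof.
move=> [_ feas]; apply: big1 => i _.
by rewrite /pos_part max_r ?feas // expr2 mul0r.
Qed.

End Penalty.

Section YstarEstimates.
Context {R : realType} {n m p : nat} {Y : set 'rV[R]_m}.
Context {f : 'rV[R]_n -> 'rV[R]_m -> R} {c : 'I_p -> 'rV[R]_n -> 'rV[R]_m -> R}.
Context {rho sigma : R} {x : 'rV[R]_n} {ystar y : 'rV[R]_m}.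
Hypotheses (rho0 : 0 < rho) (sigma0 : 0 < sigma).
Hypotheses (hystar : is_ystar Y f c rho sigma x ystar) (feas : Theta Y c x y).

Lemma is_ystar_ge_feasible :
  f x y - sigma / 2 * sqnorm y <=
  f x ystar - rho / 2 * penalty c x ystar - sigma / 2 * sqnorm ystar.
Proof.
have : psi f c rho sigma x y <= psi f c rho sigma x ystar := hystar.2 y feas.1.
by rewrite /psi -/(penalty c x y) -/(penalty c x ystar) (penalty_feasible c feas) mulr0 subr0.
Qed.

Lemma is_ystar_value_ge : f x y - sigma / 2 * sqnorm y <= f x ystar.
Proof.
have := is_ystar_ge_feasible; have := mulr_ge0 (ltW rho0) (penalty_ge0 c x ystar).
have := mulr_ge0 (ltW sigma0) (sqnorm_ge0 ystar).
by lra.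
Qed.

Lemma is_ystar_penalty_le (M : R) :
  `|f x y| <= M -> `|f x ystar| <= M ->
  rho * penalty c x ystar <= 4 * M + sigma * sqnorm y.
Proof.
rewrite !ler_norml => /andP [fy1 fy2] /andP [fs1 fs2].
have := is_ystar_ge_feasible; have := mulr_ge0 (ltW sigma0) (sqnorm_ge0 ystar).
by lra.
Qed.

End YstarEstimates.

Section AccumulationPoint.
Context {R : realType} {n m p : nat} {X : set 'rV[R]_n} {Y : set 'rV[R]_m}.
Context {f : 'rV[R]_n -> 'rV[R]_m -> R} {c : 'I_p -> 'rV[R]_n -> 'rV[R]_m -> R}.
Context {M B : R}.
Hypotheses (hM : forall a b, X a -> Y b -> `|f a b| <= M)
  (hB : forall y, Y y -> sqnorm y <= B).
Hypothesis contf : forall a b, X a -> Y b ->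
  {for (a, b), continuous (fun z : 'rV[R]_n * 'rV[R]_m => f z.1 z.2)}.
Hypothesis contc : forall i a b, X a -> Y b ->
  {for (a, b), continuous (fun z : 'rV[R]_n * 'rV[R]_m => c i z.1 z.2)}.
Hypothesis hTheta : forall x, X x -> Theta Y c x !=set0.
Context {rho sigma : nat -> R} {x : nat -> 'rV[R]_n} {xbar : 'rV[R]_n}.
Context {ystar : nat -> 'rV[R]_m} {ybar : 'rV[R]_m}.
Hypotheses (hrho0 : forall k, 0 < rho k) (hsigma0 : forall k, 0 < sigma k).
Hypotheses (hrho : rho @ \oo --> +oo) (hsigma : sigma @ \oo --> 0).
Hypotheses (hxX : forall k, X (x k)) (hx : x @ \oo --> xbar).
Hypothesis hystar : forall k, is_ystar Y f c (rho k) (sigma k) (x k) (ystar k).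
Hypotheses (hacc : acc_point ystar ybar) (Xxbar : X xbar) (Yybar : Y ybar).

Lemma sqnorm_bound_ge0 : 0 <= B.
Proof. exact: le_trans (sqnorm_ge0 ybar) (hB _ Yybar). Qed.

Lemma acc_point_feasible : Theta Y c xbar ybar.
Proof.
split=> // i; rewrite leNgt; apply/negP => viol.
set a := c i xbar ybar in viol.
have [d d0 hd] := continuous_at_pair_dist_lt (contc i _ _ Xxbar Yybar) (a / 2) ltac:(lra).
set q := (a / 2) ^+ 2; have q0 : 0 < q by rewrite exprn_gt0 //; lra.
set K := (4 * M + B + 1) / q.
have ev : \forall k \near \oo, [/\ `|x k - xbar| < d, K <= rho k & sigma k < 1].
  near=> k; split.
  - by rewrite distrC; near: k; exact: cvgr_dist_lt hx _ d0.
  - by near: k; exact: cvgry_ge hrho _.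
  - by near: k; exact: cvgr_lt hsigma _ ltr01.
have [k [xk rk sk] yk] := acc_point_near hacc ev _ d0.
have [Yyk _] := hystar k.
have [y feas] := hTheta _ (hxX k).
have big_violation : q <= penalty c (x k) (ystar k).
  apply: le_trans (penalty_ge_term _ _ _ i).
  have := hd _ _ xk yk; rewrite /= ltr_norml -/a => /andP [ca _].
  by rewrite /pos_part max_l /q ?expr2; [nra | lra].
have Kq : K * q = 4 * M + B + 1 by rewrite /K divfK // gt_eqF.
have reg_le : sigma k * sqnorm y <= B.
  have := hB _ feas.1; have := ler_wpM2r (sqnorm_ge0 y) (ltW sk); lra.
have := is_ystar_penalty_le (hsigma0 k) (hystar k) feas _
  (hM _ _ (hxX k) feas.1) (hM _ _ (hxX k) Yyk).
have := ler_wpM2r (ltW q0) rk; have := ler_wpM2l (ltW (hrho0 k)) big_violation.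
by lra.
Unshelve. all: by end_near.
Qed.

Lemma phi_set_bounded a : X a -> has_ubound [set f a y | y in Theta Y c a].
Proof.
by move=> Xa; exists M => _ [z [Yz _] <-]; apply: le_trans (ler_norm _) (hM _ _ Xa Yz).
Qed.

Lemma phi_ub a y : X a -> Theta Y c a y -> f a y <= phi Y f c a.
Proof. by move=> Xa feas; apply: ub_le_sup; [exact: phi_set_bounded | exists y]. Qed.

Lemma phi_approx a e : X a -> 0 < e ->
  exists2 y, Theta Y c a y & phi Y f c a - e < f a y.
Proof.
move=> Xa e0.
have nonempty : [set f a y | y in Theta Y c a] !=set0.
  by have [y0 feas0] := hTheta _ Xa; exists (f a y0), y0.
have [_ [y feas <-] hy] := sup_adherent e0 (conj nonempty (phi_set_bounded _ Xa)).
by exists y.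
Qed.

Hypothesis hphi : lsc_on X (phi Y f c).

Lemma acc_point_optimal y : Theta Y c xbar y -> f xbar y <= f xbar ybar.
Proof.
move=> feas; apply/ler_addgt0Pr => e e0.
set e4 := e / 4; have e40 : 0 < e4 by rewrite divr_gt0.
have [d1 d10 hd1] := hphi _ Xxbar _ e40.
have [d2 d20 hd2] := continuous_at_pair_dist_lt (contf _ _ Xxbar Yybar) _ e40.
have B1 : 0 < B + 1 by have := sqnorm_bound_ge0; lra.
have eB : 0 < e4 / (B + 1) by rewrite divr_gt0.
have ev : \forall k \near \oo,
    [/\ `|x k - xbar| < d1, `|x k - xbar| < d2 & sigma k < e4 / (B + 1)].
  near=> k; split.
  - by rewrite distrC; near: k; exact: cvgr_dist_lt hx _ d10.
  - by rewrite distrC; near: k; exact: cvgr_dist_lt hx _ d20.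
  - by near: k; exact: cvgr_lt hsigma _ eB.
have [k [xk1 xk2 sk] yk] := acc_point_near hacc ev _ d20.
have [Yyk _] := hystar k.
have [y' feas' near_phi] := phi_approx _ _ (hxX k) e40.
have phi_lsc : phi Y f c xbar - e4 < phi Y f c (x k) by apply: hd1.
have sB : sigma k * (B + 1) < e4 by rewrite -ltr_pdivlMr.
have small_reg : sigma k / 2 * sqnorm y' <= e4.
  have : sigma k * sqnorm y' <= sigma k * (B + 1).
    by apply: ler_wpM2l; [exact: ltW | have := hB _ feas'.1; lra].
  by have := hsigma0 k; have := sqnorm_ge0 y'; lra.
have := is_ystar_value_ge (hrho0 k) (hsigma0 k) (hystar k) feas'.
have := phi_ub _ _ Xxbar feas.
have := hd2 _ _ xk2 yk; rewrite /= ltr_norml => /andP [_ fk].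
by rewrite /e4 in phi_lsc near_phi small_reg fk *; lra.
Unshelve. all: by end_near.
Qed.

End AccumulationPoint.

Theorem lemmaC4 (R : realType) (n m p : nat)
  (X : set 'rV[R]_n) (Y : set 'rV[R]_m)
  (f : 'rV[R]_n -> 'rV[R]_m -> R)
  (c : 'I_p -> 'rV[R]_n -> 'rV[R]_m -> R)
  (* standing assumptions *)
  (hX0 : X !=set0) (hXc : convex_set X) (hXk : compact X)
  (hY0 : Y !=set0) (hYc : convex_set Y) (hYk : compact Y)
  (hf : C11_on (X `*` Y) (fun z : 'rV[R]_n * 'rV[R]_m => f z.1 z.2))
  (hfconc : forall x, X x -> forall y1 y2 (t : R), Y y1 -> Y y2 -> 0 <= t <= 1 ->
      t * f x y1 + (1 - t) * f x y2 <= f x (t *: y1 + (1 - t) *: y2))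
  (hc : forall i, C11_on (X `*` Y) (fun z : 'rV[R]_n * 'rV[R]_m => c i z.1 z.2))
  (hcconv : forall i x, X x -> forall y1 y2 (t : R), Y y1 -> Y y2 -> 0 <= t <= 1 ->
      c i x (t *: y1 + (1 - t) *: y2) <= t * c i x y1 + (1 - t) * c i x y2)
  (hTheta : forall x, X x -> Theta Y c x !=set0)
  (* hypotheses of the lemma *)
  (hphi : lsc_on X (phi Y f c))
  (rho sigma : nat -> R)
  (hrho0 : forall k, 0 < rho k) (hsigma0 : forall k, 0 < sigma k)
  (hrho : rho @ \oo --> +oo) (hsigma : sigma @ \oo --> 0)
  (x : nat -> 'rV[R]_n) (xbar : 'rV[R]_n)
  (hxX : forall k, X (x k)) (hx : x @ \oo --> xbar)
  (ystar : nat -> 'rV[R]_m)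
  (hystar : forall k, is_ystar Y f c (rho k) (sigma k) (x k) (ystar k))
  (ybar : 'rV[R]_m) (hacc : acc_point ystar ybar) :
  argmax_set Y f c xbar ybar.
Proof.
have contf a b : X a -> Y b ->
    {for (a, b), continuous (fun z : 'rV[R]_n * 'rV[R]_m => f z.1 z.2)}.
  by move=> Xa Yb; apply/differentiable_continuous/hf.1.
have contc i a b : X a -> Y b ->
    {for (a, b), continuous (fun z : 'rV[R]_n * 'rV[R]_m => c i z.1 z.2)}.
  by move=> Xa Yb; apply/differentiable_continuous/(hc i).1.
have [M hM] : exists M : R, forall a b, X a -> Y b -> `|f a b| <= M.
  have /compact_norm_bounded [M hM] :
      compact ((fun z : 'rV[R]_n * 'rV[R]_m => f z.1 z.2) @` (X `*` Y)).
    apply: continuous_compact; last exact: compact_setX.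
    by apply: continuous_in_subspaceT => -[a b]; rewrite inE => -[]; apply: contf.
  by exists M => a b Xa Yb; apply: hM; exists (a, b).
have [Bn hBn] := compact_norm_bounded hYk.
have hB y : Y y -> sqnorm y <= m%:R * Bn ^+ 2 by move/hBn/sqnorm_le.
have Xxbar : X xbar.
  have closedX : closed X := compact_closed (@norm_hausdorff _ _) hXk.
  by apply: (closed_cvg X closedX _ _ hx); near=> k; apply: hxX.
have Yybar : Y ybar.
  apply: compact_mem_approx hYk _ => e e0.
  by have [k _ hk] := hacc e e0 0%N; exists (ystar k) => //; have [] := hystar k.
have feas := acc_point_feasible hM hB contc hTheta hrho0 hsigma0 hrho hsigma hxX hx
  hystar hacc Xxbar Yybar.
split=> // y; exact: (acc_point_optimal hM hB contf hTheta hrho0 hsigma0 hsigma hxX hx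
  hystar hacc Xxbar Yybar hphi).
Unshelve. all: by end_near.
Qed.
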